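(* Let $n\geq 3$ and suppose the dihedral group $\mathrm{D}_{2n}$ of order $2n$ has the $m$-DCI property for some integer $m$ with $1\leq m\leq n-1$. Then $n$ is odd.
   Context: For a group $G$ and a subset $S\subseteq G$ with $1\notin S$, the Cayley digraph $\mathrm{Cay}(G,S)$ has vertex set $G$ and arc set $\{(g,sg)\mid g\in G,\ s\in S\}$. $\mathrm{Cay}(G,S)$ is a CI-digraph if for every $T\subseteq G$ with $1\notin T$ and $\mathrm{Cay}(G,T)\cong\mathrm{Cay}(G,S)$ there is $\alpha\in\mathrm{Aut}(G)$ with $S^\alpha=T$. For a positive integer $m$, $G$ has the $m$-DCI property if every Cayley digraph $\mathrm{Cay}(G,S)$ with $|S|=m$ is a CI-digraph. *)

From mathcomp Require Import all_boot all_fingroup all_solvable.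
Set Implicit Arguments. Unset Strict Implicit. Unset Printing Implicit Defensive.
Local Open Scope group_scope.

Section Cayley.
Variable gT : finGroupType.

(* Cay(G,S) has arcs (g, s g), s in S; i.e. (g,h) is an arc iff h g^-1 \in S.
   A digraph isomorphism Cay(G,S) -> Cay(G,T) is a bijection f of G
   preserving and reflecting arcs. *)
Definition cay_iso (G S T : {set gT}) : Prop :=
  exists f : gT -> gT,
    [/\ {in G &, injective f}, f @: G = G &
        {in G &, forall g h, (h * g^-1 \in S) = (f h * (f g)^-1 \in T)}].

Definition CI_digraph (G S : {set gT}) : Prop :=
  forall T : {set gT}, T \subset G -> 1 \notin T -> cay_iso G S T ->
    exists2 a : {perm gT}, a \in Aut G & a @: S = T.

Definition DCI_prop (G : {set gT}) (m : nat) : Prop :=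
  forall S : {set gT}, S \subset G -> 1 \notin S -> #|S| = m -> CI_digraph G S.
End Cayley.

From mathcomp Require Import all_boot all_fingroup all_solvable all_algebra.
From mathcomp Require Import ring zify.
Set Implicit Arguments. Unset Strict Implicit. Unset Printing Implicit Defensive.
Import GRing.Theory.

(* Write n = 2k and G = D_4k = <x, y>, with rotations x^i and reflections x^i y
   indexed by i in Z_2k.  Every automorphism of G maps <x> into itself and fixes
   its unique involution z = x^k.  The map twist : G -> Z_2k with
   twist x^i = 2i and twist x^i y = 1 - 2i is a crossed homomorphism for the
   sign action of G / <x>, so for every E in Z_2k closed under negation
   Cay(G, twist^-1 E) and Cay(G, x^E :|: x^E y) are isomorphic.  The first set
   contains z and is stable under left multiplication by z (and lies in <x> when
   E = {0, k} with k even), and E can be chosen so that the second set fails the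
   same property; so no automorphism relates the two.  Both sets contain 1:
   removing it gives the odd sizes, complementing gives the even ones.  The one
   size left over, 3 with k odd, is handled by the isomorphic prisms
   Cay(G, {z, x^2, x^-2}) and Cay(G, {x^2, x^-2, y}). *)

Section InvolutionClosedSets.
Variables (T : finType) (sigma : T -> T).
Hypothesis sigmaK : involutive sigma.
Implicit Types (E X Y : {set T}) (t : T).

Lemma fclosedU2 E t : fclosed sigma E -> fclosed sigma (t |: (sigma t |: E)).
Proof.
move=> clE u _ /eqP <-; rewrite !inE -(fclosed1 clE) (inv_eq sigmaK).
by rewrite (inj_eq (can_inj sigmaK)) orbCA.
Qed.

Lemma card_fclosedU2 E t : fclosed sigma E -> t \notin E -> sigma t != t ->
  #|t |: (sigma t |: E)| = #|E| + 2.
Proof.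
move=> clE Et tt; rewrite !cardsU1 !inE eq_sym (negbTE tt) -(fclosed1 clE) /=.
by rewrite (negbTE Et) addn2.
Qed.

Lemma fclosed_grow X Y j :
    fclosed sigma X -> fclosed sigma Y -> Y \subset X ->
    {in X :\: Y, forall t, sigma t != t} -> #|Y| + j.*2 <= #|X| ->
  exists E, [/\ fclosed sigma E, Y \subset E, E \subset X & #|E| = #|Y| + j.*2].
Proof.
move=> clX clY sYX fpf; elim: j => [|j IHj] leYX; first by exists Y; rewrite addn0.
have [|E [clE sYE sEX cardE]] := IHj; first by move: leYX; rewrite doubleS; lia.
have /set0Pn[t /setDP[Xt Et]] : X :\: E != set0.
  by rewrite -card_gt0 cardsD (setIidPr sEX) cardE subn_gt0; move: leYX; rewrite doubleS; lia.
have tt : sigma t != t by apply: fpf; rewrite inE Xt (contra (subsetP sYE t)).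
exists (t |: (sigma t |: E)); split; first exact: fclosedU2.
- by rewrite (subset_trans sYE) // setUA subsetUr.
- by rewrite !subUset !sub1set Xt -(fclosed1 clX) Xt sEX.
- by rewrite card_fclosedU2 // cardE doubleS; lia.
Qed.

End InvolutionClosedSets.

Lemma modn_double m d : m < d.*2 -> m %% d = if m < d then m else m - d.
Proof.
move=> lt_m; case: ltnP => [|le_dm]; first exact: modn_small.
by rewrite -{1}(subnK le_dm) modnDr modn_small //; lia.
Qed.

Section ZmodDouble.
Local Open Scope ring_scope.
Variable k : nat.
Hypothesis k_gt1 : (1 < k)%N.
Local Notation n := k.*2.
Implicit Types i j d : 'Z_n.

Let n_gt1 : (1 < n)%N. Proof. lia. Qed.

Lemma card_Zn : #|'Z_n| = n.
Proof. by rewrite card_ord Zp_cast. Qed.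

Lemma ltn_valZ i : (i < n)%N.
Proof. by case: i => i /=; rewrite Zp_cast. Qed.

Lemma valZ_nat a : (a%:R : 'Z_n) = (a %% n)%N :> nat.
Proof. exact: val_Zp_nat. Qed.

Lemma valZD i j : i + j = ((i + j) %% n)%N :> nat.
Proof. by rewrite -valZ_nat natrD !natr_Zp. Qed.

Lemma valZN i : - i = ((n - i) %% n)%N :> nat.
Proof. by rewrite -valZ_nat natrB ?(ltnW (ltn_valZ i)) // pchar_Zp // natr_Zp sub0r. Qed.

Lemma valZ1 : (1 : 'Z_n) = 1%N :> nat.
Proof. by rewrite (valZ_nat 1) modn_small. Qed.

Lemma natZ_eq a b : (a < n)%N -> (b < n)%N -> (a%:R == b%:R :> 'Z_n) = (a == b).
Proof. by move=> an bn; rewrite -(inj_eq (@ord_inj _)) !valZ_nat !modn_small. Qed.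

Definition zhalf : 'Z_n := k%:R.

Lemma val_zhalf : zhalf = k :> nat.
Proof. by rewrite valZ_nat modn_small //; lia. Qed.

Lemma zhalf_neq0 : zhalf != 0.
Proof. by rewrite -(inj_eq (@ord_inj _)) val_zhalf /=; lia. Qed.

Lemma addzhalf : zhalf + zhalf = 0.
Proof. by apply: ord_inj; rewrite valZD val_zhalf addnn modnn. Qed.

Lemma oppzhalf : - zhalf = zhalf.
Proof. by apply/eqP; rewrite eq_sym -addr_eq0 addzhalf. Qed.

Lemma double_eq0 d : (d + d == 0) = (d == 0) || (d == zhalf).
Proof.
have lt_d := ltn_valZ d.
rewrite -!(inj_eq (@ord_inj _)) valZD val_zhalf modn_double /=; last lia.
by case: ifP; lia.
Qed.

Lemma oppZ_eq d : (- d == d) = (d == 0) || (d == zhalf).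
Proof. by rewrite -double_eq0 eq_sym -subr_eq0 opprK. Qed.

Definition lower_half i := (i < k)%N.

Lemma lower_half_addzhalf i : lower_half (zhalf + i) = ~~ lower_half i.
Proof.
have lt_i := ltn_valZ i.
by rewrite /lower_half valZD val_zhalf modn_double; [case: ifP|]; lia.
Qed.

Definition zodd i := odd i.

Lemma zoddD i j : zodd (i + j) = zodd i (+) zodd j.
Proof. by rewrite /zodd valZD odd_mod ?odd_double // oddD. Qed.

Lemma zoddN i : zodd (- i) = zodd i.
Proof. by rewrite /zodd valZN odd_mod ?odd_double // oddB ?odd_double ?(ltnW (ltn_valZ i)). Qed.

Lemma zodd_nat a : zodd a%:R = odd a.
Proof. by rewrite /zodd valZ_nat odd_mod ?odd_double. Qed.

Lemma zodd_zhalf : zodd zhalf = odd k.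
Proof. exact: zodd_nat. Qed.

Lemma fclosed_signr (E : {set 'Z_n}) (b : bool) d :
  fclosed -%R E -> ((-1) ^+ b * d \in E) = (d \in E).
Proof. by move=> clE; rewrite mulr_sign; case: b; rewrite -?(fclosed1 clE). Qed.

Lemma Zn2_neq0 : (2 : 'Z_n) != 0.
Proof. by rewrite (natZ_eq (a := 2) (b := 0)) //; lia. Qed.

Definition pm_two : {set 'Z_n} := [set 2; -2].

Lemma fclosed_pm_two : fclosed -%R pm_two.
Proof. by move=> u _ /eqP <-; rewrite !inE !eqr_oppLR opprK orbC. Qed.

Lemma even_pm_two d : d \in pm_two -> ~~ zodd d.
Proof. by rewrite !inE; case/orP=> /eqP ->; rewrite ?zoddN (zodd_nat 2). Qed.

Lemma zero_notin_pm_two : 0 \notin pm_two.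
Proof. by rewrite !inE ![0 == _]eq_sym oppr_eq0 orbb; apply: Zn2_neq0. Qed.

Lemma zhalf_notin_pm_two : odd k -> zhalf \notin pm_two.
Proof. by move=> odd_k; apply/negP=> /even_pm_two; rewrite zodd_zhalf odd_k. Qed.

Lemma card_pm_two : odd k -> #|pm_two| = 2%N.
Proof.
move=> odd_k; have := zero_notin_pm_two; have := zhalf_notin_pm_two odd_k.
rewrite !inE !negb_or ![_ == 2]eq_sym => /andP[zh2 _] /andP[two0 _].
by rewrite cards2 eq_sym oppZ_eq negb_or two0 zh2.
Qed.

Lemma exists_fclosed_avoiding_zhalf e : (e <= n - 2)%N -> ~~ odd e ->
  exists E : {set 'Z_n}, [/\ fclosed -%R E, 0 \in E, zhalf \notin E & #|E| = e.+1].
Proof.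
move=> le_e even_e.
have [|||||E [clE sYE sEX cardE]] :=
  fclosed_grow opprK (X := ~: [set zhalf]) (Y := [set 0]) (j := e./2).
- by move=> u _ /eqP <-; rewrite !inE eqr_oppLR oppzhalf.
- by move=> u _ /eqP <-; rewrite !inE oppr_eq0.
- by rewrite sub1set !inE eq_sym zhalf_neq0.
- by move=> u; rewrite !inE oppZ_eq negb_or andbC.
- by rewrite cards1 cardsC1 card_Zn even_halfK //; lia.
exists E; split=> //; first by rewrite (subsetP sYE) ?set11.
- by apply/negP => /(subsetP sEX); rewrite !inE eqxx.
- by rewrite cardE cards1 even_halfK.
Qed.

Lemma exists_fclosed_not_zhalf_stable e : (3 <= e <= n - 3)%N -> odd e ->
  exists E : {set 'Z_n},
    [/\ fclosed -%R E, 0 \in E, 1 \in E, zhalf + 1 \notin E & #|E| = e.+1].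
Proof.
move=> /andP[e_ge3 e_le] odd_e.
pose Y0 : {set 'Z_n} := [set 0; zhalf].
pose Y := 1 |: (- 1 |: Y0).
have clY0 : fclosed -%R Y0.
  by move=> u _ /eqP <-; rewrite !inE oppr_eq0 eqr_oppLR oppzhalf.
have one_Y0 : 1 \notin Y0.
  by rewrite !inE -!(inj_eq (@ord_inj _)) val_zhalf valZ1 /=; lia.
have clY : fclosed -%R Y by apply: fclosedU2 clY0; apply: opprK.
have cardY : #|Y| = 4%N.
  rewrite (card_fclosedU2 clY0) //; first by rewrite cards2 eq_sym zhalf_neq0.
  by rewrite oppZ_eq; apply: contra one_Y0; rewrite !inE.
have shift_Y : zhalf + 1 \notin Y.
  rewrite !inE -!(inj_eq (@ord_inj _)) valZD valZN val_zhalf valZ1 /=.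
  by rewrite !modn_small; lia.
pose W : {set 'Z_n} := [set zhalf + 1; - (zhalf + 1)].
have [|||||E [clE sYE sEX cardE]] :=
  fclosed_grow opprK (X := ~: W) (Y := Y) (j := (e - 3)./2).
- by move=> u _ /eqP <-; rewrite !inE !eqr_oppLR opprK orbC.
- exact: clY.
- apply/subsetP=> u Yu; rewrite !inE negb_or.
  apply/andP; split; apply: contraNneq shift_Y => eq_u; first by rewrite -eq_u.
  by rewrite (fclosed1 clY) /= -eq_u.
- by move=> u; rewrite !inE oppZ_eq !negb_or => /andP[/and4P[_ _ -> ->]].
- rewrite cardY even_halfK ?oddB ?odd_e // cardsCs setCK card_Zn cards2.
  by case: eqP => _ /=; lia.
exists E; split=> //; try by rewrite (subsetP sYE) // !inE eqxx ?orbT.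
- by apply/negP => /(subsetP sEX); rewrite !inE eqxx.
- by rewrite cardE cardY even_halfK ?oddB ?odd_e //; lia.
Qed.

End ZmodDouble.

Lemma perm_imsetC (T : finType) (a : {perm T}) (A : {set T}) : a @: (~: A) = ~: (a @: A).
Proof.
apply/setP=> u; rewrite -[u](permKV a) inE !(mem_imset _ _ (@perm_inj _ a)).
by rewrite inE.
Qed.

Section CayleyIsomorphisms.
Local Open Scope group_scope.
Variable gT : finGroupType.
Implicit Types (S T : {set gT}) (f : gT -> gT) (a : {perm gT}).

Definition cay_arcs f S T := forall g h, (h * g^-1 \in S) = (f h * (f g)^-1 \in T).

Lemma cay_isoT S T : cay_iso [set: gT] S T <-> exists2 f, injective f & cay_arcs f S T.
Proof.
split=> [[f [injf _ arcsf]]|[f injf arcsf]].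
  by exists f => [g h|g h]; [apply: injf|apply: arcsf]; rewrite ?inE.
exists f; split=> [g h _ _|   |g h _ _]; [exact: injf| |exact: arcsf].
by apply/eqP; rewrite eqEcard subsetT (card_imset _ injf) leqnn.
Qed.

Lemma cay_iso_card S T : cay_iso [set: gT] S T -> #|S| = #|T|.
Proof.
case/cay_isoT=> f injf arcsf.
rewrite -(card_rcoset T (f 1)) -(card_preimset (T :* f 1) injf).
by apply: eq_card => h; rewrite !inE mem_rcoset -arcsf invg1 mulg1.
Qed.

Lemma cay_iso_mem1 S T : cay_iso [set: gT] S T -> (1 \in S) = (1 \in T).
Proof. by case/cay_isoT=> f _ arcsf; have := arcsf 1 1; rewrite !mulgV. Qed.

Lemma cay_isoD1 S T : cay_iso [set: gT] S T -> cay_iso [set: gT] (S :\ 1) (T :\ 1).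
Proof.
case/cay_isoT=> f injf arcsf; apply/cay_isoT; exists f => // g h.
by rewrite !inE -arcsf -!eq_mulgV1 (inj_eq injf).
Qed.

Lemma cay_isoC S T : cay_iso [set: gT] S T -> cay_iso [set: gT] (~: S) (~: T).
Proof.
by case/cay_isoT=> f injf arcsf; apply/cay_isoT; exists f => // g h; rewrite !inE arcsf.
Qed.

(* Each [s |-> f (s * g) * (f g)^-1] maps S injectively into T, hence onto T. *)
Lemma cay_iso_of_mul f S T :
    injective f -> #|T| <= #|S| ->
    (forall g s, s \in S -> f (s * g) * (f g)^-1 \in T) ->
  cay_iso [set: gT] S T.
Proof.
move=> injf leTS fST; apply/cay_isoT; exists f => // g h.
have imST : [set f (s * g) * (f g)^-1 | s in S] = T.
  apply/eqP; rewrite eqEcard card_imset => [|s t /mulIg/injf/mulIg //].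
  by rewrite leTS andbT; apply/subsetP=> _ /imsetP[s Ss ->]; apply: fST.
apply/idP/idP=> [Shg|]; first by rewrite -{1}(mulgKV g h) fST.
by rewrite -imST => /imsetP[s Ss /mulIg/injf ->]; rewrite mulgK.
Qed.

Section Automorphism.
Variable a : {perm gT}.
Hypothesis Aa : a \in Aut [set: gT].

Lemma autM u v : a (u * v) = a u * a v.
Proof. by rewrite -(autmE Aa) morphM ?inE. Qed.

Lemma autX u m : a (u ^+ m) = a u ^+ m.
Proof. by rewrite -(autmE Aa) morphX ?inE. Qed.

Lemma aut1 : a 1 = 1.
Proof. by rewrite -(autmE Aa) morph1. Qed.

End Automorphism.

Definition CI_obstruction S T :=
  cay_iso [set: gT] S T /\ forall a, a \in Aut [set: gT] -> a @: S != T.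

Lemma CI_obstructionC S T : CI_obstruction S T -> CI_obstruction (~: S) (~: T).
Proof.
case=> isoST notAut; split=> [|a Aa]; first exact: cay_isoC.
by rewrite perm_imsetC (inj_eq (@setC_inj _)) notAut.
Qed.

Lemma CI_obstructionD1 S T : 1 \in S -> CI_obstruction S T -> CI_obstruction (S :\ 1) (T :\ 1).
Proof.
move=> S1 [isoST notAut]; split=> [|a Aa]; first exact: cay_isoD1.
apply: contra (notAut a Aa) => /eqP imS; apply/eqP.
rewrite -(setD1K S1) imsetU1 aut1 // imS setD1K //.
by rewrite -(cay_iso_mem1 isoST).
Qed.

Lemma CI_obstruction_not_DCI S T :
  CI_obstruction S T -> 1 \notin S -> 1 \notin T -> ~ DCI_prop [set: gT] #|S|.
Proof.
move=> [isoST notAut] S1 T1 DCI.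
have [a Aa imS] := DCI S (subsetT S) S1 erefl T (subsetT T) T1 isoST.
by case/eqP: (notAut a Aa).
Qed.

End CayleyIsomorphisms.

Section Dihedral.
Local Open Scope group_scope.
Variables (gT : finGroupType) (k : nat) (x y : gT).
Hypotheses (k_gt1 : 1 < k) (ox : #[x] = k.*2) (oy : #[y] = 2).
Hypotheses (xy : x ^ y = x^-1) (notXy : y \notin <[x]>).
Hypothesis defG : <[x]> * <[y]> = [set: gT].
Local Notation n := k.*2.
Local Notation zh := (zhalf k).
Implicit Types (i j d : 'Z_n) (g h u : gT) (S T : {set gT}) (E : {set 'Z_n}).
Implicit Types (a : {perm gT}) (b c : bool).

Definition rot i := x ^+ i.
Definition flip i := x ^+ i * y.
Local Notation z := (rot zh).
Local Notation pm2 := (pm_two k).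

Lemma expx_mod m : x ^+ (m %% n) = x ^+ m.
Proof. by rewrite -ox expg_mod_order. Qed.

Lemma rot_nat m : rot m%:R%R = x ^+ m.
Proof. by rewrite /rot valZ_nat // expx_mod. Qed.

Lemma rotD i j : rot (i + j)%R = rot i * rot j.
Proof. by rewrite /rot valZD // expx_mod expgD. Qed.

Lemma rot0 : rot 0%R = 1.
Proof. by []. Qed.

Lemma rotN i : rot (- i)%R = (rot i)^-1.
Proof. by apply/eqP; rewrite eq_sym eq_invg_mul -rotD subrr. Qed.

Lemma yV : y^-1 = y.
Proof. by apply/eqP; rewrite eq_invg_mul -(expgS y 1) -oy expg_order. Qed.

Lemma y_rot i : y * rot i = flip (- i)%R.
Proof.
have conj_rot : y * rot i * y = rot (- i)%R.
  by rewrite rotN -{1}yV -mulgA -conjgE /rot conjXg xy expgVn.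
by rewrite /flip -/(rot _) -conj_rot -!mulgA -{3}yV mulVg mulg1.
Qed.

Lemma rot_flip i j : rot i * flip j = flip (i + j)%R.
Proof. by rewrite /flip mulgA -rotD. Qed.

Lemma flip_rot i j : flip i * rot j = flip (i - j)%R.
Proof. by rewrite /flip -mulgA y_rot rot_flip. Qed.

Lemma flip_y i : flip i * y = rot i.
Proof. by rewrite /flip -mulgA -{1}yV mulVg mulg1. Qed.

Lemma flip_flip i j : flip i * flip j = rot (i - j)%R.
Proof. by rewrite [flip j]/flip -/(rot j) mulgA flip_rot flip_y. Qed.

Lemma rot_inj : injective rot.
Proof.
move=> i j /eqP; rewrite /rot eq_expg_mod_order ox !modn_small ?ltn_valZ //.
by move/eqP/ord_inj.
Qed.

Lemma flip_inj : injective flip.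
Proof. by move=> i j /mulIg/rot_inj. Qed.

Lemma mem_rot i : rot i \in <[x]>.
Proof. exact: mem_cycle. Qed.

Lemma mem_flip i : flip i \notin <[x]>.
Proof. by apply: contra notXy; rewrite groupMl ?mem_cycle. Qed.

Lemma rot_eq_flip i j : (rot i == flip j) = false.
Proof. by apply: contraNF (mem_flip j) => /eqP <-; apply: mem_rot. Qed.

Lemma y_eq_rot i : (y == rot i) = false.
Proof. by apply: contraNF notXy => /eqP ->; apply: mem_rot. Qed.

Variant dih_spec : gT -> Prop :=
  | DihRot i : dih_spec (rot i)
  | DihFlip i : dih_spec (flip i).

Lemma dihP g : dih_spec g.
Proof.
have : g \in <[x]> * <[y]> by rewrite defG inE.
case/mulsgP=> _ _ /cycleP[a ->] /cycleP[b ->] ->.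
rewrite -rot_nat -(expg_mod_order y) oy.
have : b %% 2 < 2 by rewrite ltn_mod.
by case: (b %% 2) => [|[|//]] _; [rewrite mulg1; apply: DihRot|apply: DihFlip].
Qed.

Definition dih_exp g : 'Z_n := odflt 0%R [pick i | (rot i == g) || (flip i == g)].

Lemma dih_exp_rot i : dih_exp (rot i) = i.
Proof.
rewrite /dih_exp; case: pickP => [j|/(_ i)]; last by rewrite eqxx.
by rewrite [flip _ == _]eq_sym rot_eq_flip orbF => /eqP/rot_inj.
Qed.

Lemma dih_exp_flip i : dih_exp (flip i) = i.
Proof.
rewrite /dih_exp; case: pickP => [j|/(_ i)]; last by rewrite eqxx orbT.
by rewrite rot_eq_flip => /eqP/flip_inj.
Qed.

Lemma dih_eq g h : dih_exp g = dih_exp h -> (g \in <[x]>) = (h \in <[x]>) -> g = h.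
Proof.
case: (dihP g) => i; case: (dihP h) => j;
  by rewrite ?dih_exp_rot ?dih_exp_flip ?mem_rot ?(negbTE (mem_flip _)) => -> // ?.
Qed.

Lemma dih_exp_rotM i g : dih_exp (rot i * g) = (i + dih_exp g)%R.
Proof. by case: (dihP g) => j; rewrite ?rot_flip -?rotD ?dih_exp_rot ?dih_exp_flip. Qed.

Lemma mem_rotM i g : (rot i * g \in <[x]>) = (g \in <[x]>).
Proof. by rewrite groupMl ?mem_rot. Qed.

Lemma ypowV b : (y ^+ b)^-1 = y ^+ b.
Proof. by rewrite -expgVn yV. Qed.

Lemma ypowK b : y ^+ b * y ^+ b = 1.
Proof. by rewrite -{1}ypowV mulVg. Qed.

Lemma ypow_conj_rot b d : y ^+ b * rot d * y ^+ b = rot ((-1) ^+ b * d)%R.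
Proof.
case: b; rewrite /= ?expg0 ?expg1 ?mul1g ?mulg1 ?expr0 ?expr1 ?mul1r ?mulN1r //.
by rewrite y_rot flip_y.
Qed.

Lemma ypow_rot_inj b c d e : y ^+ b * rot d = y ^+ c * rot e -> b = c /\ d = e.
Proof.
case: b; case: c; rewrite /= ?expg0 ?expg1 ?mul1g ?y_rot => /eqP.
- by move/eqP/flip_inj/oppr_inj.
- by rewrite eq_sym rot_eq_flip.
- by rewrite rot_eq_flip.
- by move/eqP/rot_inj.
Qed.

Section Automorphism.
Variable a : {perm gT}.
Hypothesis Aa : a \in Aut [set: gT].

Lemma aut_mem_cycle u : u \in <[x]> -> a u \in <[x]>.
Proof.
have flip_sqr g : g \notin <[x]> -> g * g = 1.
  by case: (dihP g) => i; rewrite ?mem_rot // flip_flip subrr.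
have ax : a x \in <[x]>.
  apply: contraT => /flip_sqr sq1.
  have : x * x = 1 by apply: (@perm_inj _ a); rewrite autM // sq1 aut1.
  by move/eqP; rewrite -(expgS x 1) -order_dvdn ox => /(dvdn_leq (isT : 0 < 2)); lia.
by case/cycleP=> m ->; rewrite autX // groupX.
Qed.

Lemma aut_z : a z = z.
Proof.
have [j az] : exists j, a z = rot j.
  case: (dihP (a z)) (aut_mem_cycle (mem_rot zh)) => j; first by exists j.
  by rewrite (negbTE (mem_flip j)).
have : rot (j + j)%R = rot 0%R.
  by rewrite rotD -az -autM // -rotD (addzhalf k_gt1) rot0 aut1.
move/rot_inj/eqP; rewrite double_eq0 // => /orP[/eqP j0|/eqP jzh]; last by rewrite az jzh.
have : z = rot 0%R by apply: (@perm_inj _ a); rewrite az j0 rot0 aut1.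
by move/rot_inj/eqP; rewrite (negbTE (zhalf_neq0 k_gt1)).
Qed.

End Automorphism.

Lemma aut_imset_mem_z a S T : a \in Aut [set: gT] -> a @: S = T -> (z \in S) = (z \in T).
Proof. by move=> Aa <-; rewrite -{2}(aut_z Aa) (mem_imset _ _ (@perm_inj _ a)). Qed.

Lemma aut_imset_sub_cycle a S T : a \in Aut [set: gT] -> a @: S = T ->
  S \subset <[x]> -> T \subset <[x]>.
Proof.
move=> Aa <- sSX; apply/subsetP=> _ /imsetP[u Su ->].
exact/(aut_mem_cycle Aa)/(subsetP sSX).
Qed.

Lemma aut_imset_zmul a S T : a \in Aut [set: gT] -> a @: S = T ->
  {in S, forall u, z * u \in S} -> {in T, forall u, z * u \in T}.
Proof.
move=> Aa <- zS _ /imsetP[u Su ->].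
by rewrite -{1}(aut_z Aa) -autM // imset_f // zS.
Qed.

Definition twist g : 'Z_n :=
  if g \in <[x]> then (dih_exp g + dih_exp g)%R else (1 - (dih_exp g + dih_exp g))%R.

Lemma twist_rot i : twist (rot i) = (i + i)%R.
Proof. by rewrite /twist mem_rot dih_exp_rot. Qed.

Lemma twist_flip i : twist (flip i) = (1 - (i + i))%R.
Proof. by rewrite /twist (negbTE (mem_flip i)) dih_exp_flip. Qed.

Lemma zodd_twist_flip i : zodd (twist (flip i)).
Proof.
by rewrite twist_flip (zoddD k_gt1) (zoddN k_gt1) (zoddD k_gt1) addbb (zodd_nat _ 1).
Qed.

Lemma twistM u g : twist (u * g) = ((-1) ^+ (g \notin <[x]>) * twist u + twist g)%R.
Proof.
case: (dihP u) => i; case: (dihP g) => j;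
  rewrite -?rotD ?rot_flip ?flip_rot ?flip_flip ?twist_rot ?twist_flip;
  rewrite ?mem_rot ?(mem_flip j) /= ?expr0 ?expr1; ring.
Qed.

Lemma twist_zM u : twist (z * u) = twist u.
Proof. by rewrite twistM twist_rot (addzhalf k_gt1) mulr0 add0r. Qed.

Lemma twist_eq0 u : (twist u == 0%R) = (u == 1) || (u == z).
Proof.
case: (dihP u) => i.
  by rewrite twist_rot double_eq0 // -rot0 !(inj_eq rot_inj).
have /negbTE-> : twist (flip i) != 0%R.
  by apply: contraTneq (zodd_twist_flip i) => ->.
have flip_neq v : v \in <[x]> -> (flip i == v) = false.
  by move=> Xv; apply: contraNF (mem_flip i) => /eqP->.
by rewrite !flip_neq ?group1 ?mem_rot.
Qed.

Definition rotflip_set (E : {set 'Z_n}) := rot @: E :|: flip @: E.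

Lemma mem_rotflip_rot E d : (rot d \in rotflip_set E) = (d \in E).
Proof.
rewrite inE (mem_imset _ _ rot_inj) orbC; case: imsetP => // -[i _ /eqP].
by rewrite rot_eq_flip.
Qed.

Lemma mem_rotflip_flip E d : (flip d \in rotflip_set E) = (d \in E).
Proof.
rewrite inE (mem_imset _ _ flip_inj); case: imsetP => // -[i _ /eqP].
by rewrite eq_sym rot_eq_flip.
Qed.

Lemma mem_rotflip E b c d : fclosed (-%R)%R E ->
  (y ^+ b * rot d * y ^+ c \in rotflip_set E) = (d \in E).
Proof.
move=> clE; case: b; case: c; rewrite /= ?expg0 ?expg1 ?mul1g ?mulg1.
- by rewrite y_rot flip_y mem_rotflip_rot -(fclosed1 clE).
- by rewrite y_rot mem_rotflip_flip -(fclosed1 clE).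
- exact: mem_rotflip_flip.
- exact: mem_rotflip_rot.
Qed.

Lemma card_rotflip E : #|rotflip_set E| = (#|E|).*2.
Proof.
rewrite cardsU (card_imset _ rot_inj) (card_imset _ flip_inj).
suff -> : rot @: E :&: flip @: E = set0 by rewrite cards0 subn0 addnn.
apply/setP=> u; rewrite !inE; apply/negbTE/andP=> -[/imsetP[i _ ->] /imsetP[j _ /eqP]].
by rewrite rot_eq_flip.
Qed.

(* [lower_half] tells [u] apart from [z * u], which has the same twist. *)
Definition twist_map g := y ^+ lower_half (dih_exp g) * rot (twist g).

Lemma twist_map_inj : injective twist_map.
Proof.
move=> g h /ypow_rot_inj[low_gh tw_gh].
have /eqP : twist (h * g^-1) = 0%R.
  have := twistM (h * g^-1) g; rewrite mulgKV tw_gh -{1}[twist h]add0r.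
  by move/addIr/esym => eps_tw; rewrite -[twist _](signrMK (g \notin <[x]>)) eps_tw mulr0.
rewrite twist_eq0 -eq_mulgV1 => /orP[/eqP -> // | /eqP hg_z].
move: low_gh; rewrite -(mulgKV g h) hg_z dih_exp_rotM (lower_half_addzhalf k_gt1).
by case: (lower_half _).
Qed.

Theorem cay_iso_twist E : fclosed (-%R)%R E ->
  cay_iso [set: gT] (twist @^-1: E) (rotflip_set E).
Proof.
move=> clE; apply/cay_isoT; exists twist_map; first exact: twist_map_inj.
move=> g h; rewrite /twist_map invMg ypowV -rotN mulgA -(mulgA (y ^+ _) (rot _)) -rotD.
rewrite mem_rotflip // -{2}(mulgKV g h) twistM addrK inE.
by rewrite fclosed_signr.
Qed.

Lemma mem1_twist E : (1 \in twist @^-1: E) = (0%R \in E).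
Proof. by rewrite -rot0 inE twist_rot addr0. Qed.

Lemma card_twist E : fclosed (-%R)%R E -> #|twist @^-1: E| = (#|E|).*2.
Proof. by move=> clE; rewrite (cay_iso_card (cay_iso_twist clE)) card_rotflip. Qed.

Lemma twist_obstruction_z E : fclosed (-%R)%R E -> 0%R \in E -> zh \notin E ->
  CI_obstruction (twist @^-1: E) (rotflip_set E).
Proof.
move=> clE E0 Ezh; split=> [|a Aa]; first exact: cay_iso_twist.
apply/eqP=> /(aut_imset_mem_z Aa).
by rewrite inE twist_rot (addzhalf k_gt1) E0 mem_rotflip_rot (negbTE Ezh).
Qed.

Lemma twist_obstruction_zmul E d : fclosed (-%R)%R E -> d \in E -> (zh + d)%R \notin E ->
  CI_obstruction (twist @^-1: E) (rotflip_set E).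
Proof.
move=> clE Ed Ezd; split=> [|a Aa]; first exact: cay_iso_twist.
apply/eqP=> imS.
have zS : {in twist @^-1: E, forall u, z * u \in twist @^-1: E}.
  by move=> u; rewrite !inE twist_zM.
have /(aut_imset_zmul Aa imS zS) : rot d \in rotflip_set E by rewrite mem_rotflip_rot.
by rewrite -rotD mem_rotflip_rot (negbTE Ezd).
Qed.

Lemma twist_obstruction_cycle : ~~ odd k ->
  CI_obstruction (twist @^-1: [set 0%R; zh]) (rotflip_set [set 0%R; zh]).
Proof.
move=> even_k; split=> [|a Aa].
  by apply: cay_iso_twist => u _ /eqP <-; rewrite !inE oppr_eq0 eqr_oppLR (oppzhalf k_gt1).
apply/eqP=> /(aut_imset_sub_cycle Aa) sub_cycle.
have S_sub : twist @^-1: [set 0%R; zh] \subset <[x]>.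
  apply/subsetP=> u; rewrite !inE; case: (dihP u) => i; rewrite ?mem_rot //.
  case/orP=> /eqP tw; have := zodd_twist_flip i;
    by rewrite tw ?(zodd_zhalf k_gt1) ?(negbTE even_k).
have := subsetP (sub_cycle S_sub) (flip 0%R).
by rewrite mem_rotflip_flip !inE eqxx (negbTE (mem_flip 0%R)) => /(_ isT).
Qed.

Section OddHalf.
Hypothesis odd_k : odd k.

(* For odd k, G = <x^2, y> \x <z>, and [prism_map] sends x^(2u) z^v y^b to
   y^v x^(2u) z^b: left multiplication by z becomes left multiplication by y. *)
Definition prism_map g :=
  y ^+ zodd (dih_exp g) * rot (dih_exp g + zh *+ (zodd (dih_exp g) (+) (g \notin <[x]>)))%R.

Lemma zodd_zhalf_muln b : zodd (zh *+ b)%R = b.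
Proof. by case: b; rewrite ?mulr1n ?mulr0n ?(zodd_zhalf k_gt1). Qed.

Lemma prism_map_inj : injective prism_map.
Proof.
move=> g h /ypow_rot_inj[odd_gh mu_gh].
have mem_gh : (g \notin <[x]>) = (h \notin <[x]>).
  move: (congr1 (@zodd k) mu_gh).
  by rewrite !(zoddD k_gt1) !zodd_zhalf_muln odd_gh !addKb.
apply: dih_eq; last exact: negb_inj.
by move: mu_gh; rewrite odd_gh mem_gh => /addIr.
Qed.

Lemma ypow_negb b : y ^+ (~~ b) = y * y ^+ b.
Proof. by case: b; rewrite /= ?expg0 ?expg1 ?mulg1 // -{1}yV mulVg. Qed.

Lemma prism_map_zM g : prism_map (z * g) = y * prism_map g.
Proof.
rewrite /prism_map dih_exp_rotM mem_rotM (zoddD k_gt1) (zodd_zhalf k_gt1) odd_k addTb addNb.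
rewrite ypow_negb -mulgA; congr (_ * (_ * rot _)).
case: (_ (+) _); rewrite /= ?mulr1n ?mulr0n ?addr0 1?addrC //.
by rewrite addrA (addzhalf k_gt1) add0r.
Qed.

Lemma prism_map_rotM i g : ~~ zodd i ->
  prism_map (rot i * g) = rot ((-1) ^+ zodd (dih_exp g) * i)%R * prism_map g.
Proof.
move=> even_i; rewrite /prism_map dih_exp_rotM mem_rotM (zoddD k_gt1) (negbTE even_i) /=.
rewrite -ypow_conj_rot -!mulgA; congr (_ * _).
by rewrite (mulgA (y ^+ _) (y ^+ _)) ypowK mul1g -rotD addrA.
Qed.

Definition prism_src := rot @: (zh |: pm2).
Definition prism_dst := y |: rot @: pm2.

Lemma card_prism_src : #|prism_src| = 3.
Proof.
by rewrite (card_imset _ rot_inj) cardsU1 (negbTE (zhalf_notin_pm_two k_gt1 odd_k)) card_pm_two.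
Qed.

Lemma cay_iso_prism : cay_iso [set: gT] prism_src prism_dst.
Proof.
apply: (cay_iso_of_mul prism_map_inj).
  by rewrite card_prism_src cardsU1 (card_imset _ rot_inj) card_pm_two //; case: (_ \notin _).
move=> g _ /imsetP[d + ->]; rewrite in_setU1 => /orP[/eqP->|pm2d].
  by rewrite prism_map_zM mulgK setU11.
rewrite prism_map_rotM ?(even_pm_two k_gt1) // mulgK inE (mem_imset _ _ rot_inj).
by rewrite (fclosed_signr _ _ (@fclosed_pm_two k)) pm2d orbT.
Qed.

Lemma prism_not_DCI : ~ DCI_prop [set: gT] 3.
Proof.
have zh_pm2 := zhalf_notin_pm_two k_gt1 odd_k.
have zero_pm2 := zero_notin_pm_two k_gt1.
rewrite -card_prism_src; apply: CI_obstruction_not_DCI.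
- split=> [|a Aa]; first exact: cay_iso_prism.
  apply/eqP=> /(aut_imset_mem_z Aa); rewrite (mem_imset _ _ rot_inj) setU11.
  by rewrite /prism_dst in_setU1 eq_sym y_eq_rot (mem_imset _ _ rot_inj) (negbTE zh_pm2).
- rewrite -rot0 (mem_imset _ _ rot_inj) in_setU1 eq_sym (negbTE (zhalf_neq0 k_gt1)).
  by rewrite (negbTE zero_pm2).
- by rewrite -rot0 in_setU1 eq_sym y_eq_rot (mem_imset _ _ rot_inj) (negbTE zero_pm2).
Qed.

End OddHalf.

Lemma card_dih : #|gT| = n.*2.
Proof.
rewrite -cardsT; suff -> : [set: gT] = rotflip_set setT by rewrite card_rotflip cardsT card_Zn.
apply/setP=> u; rewrite inE.
by case: (dihP u) => i; rewrite ?mem_rotflip_rot ?mem_rotflip_flip inE.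
Qed.

Lemma twist_obstruction_size e : e <= n - 2 -> (e = 1%N -> ~~ odd k) ->
  exists S T, [/\ CI_obstruction S T, 1 \in S & #|S| = (e.+1).*2].
Proof.
move=> le_e e1_even.
suff [E [clE E0 cardE obstr]] : exists E, [/\ fclosed (-%R)%R E, 0%R \in E, #|E| = e.+1
    & CI_obstruction (twist @^-1: E) (rotflip_set E)].
  by exists (twist @^-1: E), (rotflip_set E); rewrite mem1_twist card_twist ?cardE.
have [odd_e|even_e] := boolP (odd e); last first.
  have [E [clE E0 Ezh cardE]] := exists_fclosed_avoiding_zhalf k_gt1 le_e even_e.
  by exists E; split=> //; apply: twist_obstruction_z.
have [e1|e_neq1] := eqVneq e 1%N.
  exists [set 0%R; zh]; split.
  - by move=> u _ /eqP <-; rewrite !inE oppr_eq0 eqr_oppLR (oppzhalf k_gt1).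
  - exact: set21.
  - by rewrite e1 cards2 eq_sym (zhalf_neq0 k_gt1).
  - exact/twist_obstruction_cycle/e1_even.
have e_range : 3 <= e <= n - 3.
  have e_neq : e != n - 2.
    by apply: contraTneq odd_e => ->; rewrite oddB ?odd_double //; lia.
  have e_ge3 : 2 < e by move: odd_e e_neq1; case: (e) => [|[|[|]]].
  by apply/andP; split; lia.
have [E [clE E0 E1 Ezh1 cardE]] := exists_fclosed_not_zhalf_stable k_gt1 e_range odd_e.
by exists E; split=> //; apply: (twist_obstruction_zmul clE E1).
Qed.

Theorem not_DCI_prop m : 1 <= m <= n - 1 -> ~ DCI_prop [set: gT] m.
Proof.
move=> /andP[m_ge1 m_le]; set h := m./2.
have [odd_m|even_m] := boolP (odd m).
  have m_eq : m = h.*2.+1 by rewrite -[LHS]odd_double_half odd_m.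
  have [/andP[/eqP h1 odd_k]|not_prism] := boolP ((h == 1%N) && odd k).
    by rewrite m_eq h1; apply: prism_not_DCI.
  have [||S [T [obstr S1 cardS]]] := twist_obstruction_size (e := h).
  - by lia.
  - by move=> h1; move: not_prism; rewrite h1 eqxx.
  have cardSD1 : #|S :\ 1| = #|S| - 1 by rewrite [#|S|](cardsD1 1) S1 add1n subn1.
  rewrite (_ : m = #|S :\ 1|); last by rewrite cardSD1 cardS; lia.
  by apply: CI_obstruction_not_DCI (CI_obstructionD1 S1 obstr) _ _; rewrite setD11.
have m_eq : m = h.*2 by rewrite -[LHS]odd_double_half (negbTE even_m).
have [||S [T [obstr S1 cardS]]] := twist_obstruction_size (e := n - 1 - h).
- by lia.
- by move=> e1; exfalso; lia.
have T1 : 1 \in T by rewrite -(cay_iso_mem1 obstr.1).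
rewrite (_ : m = #|~: S|); last by rewrite cardsCs setCK card_dih cardS; lia.
by apply: CI_obstruction_not_DCI (CI_obstructionC obstr) _ _; rewrite !inE ?S1 ?T1.
Qed.

End Dihedral.

Lemma dihedral_generators n : 1 < n ->
  exists x y : dihedral_gtype n.*2, [/\ #[x]%g = n, #[y]%g = 2,
    (x ^ y = x^-1)%g, y \notin <[x]>%g & (<[x]> * <[y]>)%g = [set: _]].
Proof.
move=> n_gt1; have := isog_refl [set: dihedral_gtype n.*2]%G.
case/(isoGrpP _ (Grp_dihedral n_gt1)) => _ /existsP[-[x y] /= /eqP[defG xn y2 xy]].
have oG : #|[set: dihedral_gtype n.*2]| = n.*2 := card_dihedral n_gt1.
have {}defG : (<[x]> * <[y]>)%g = [set: _].
  by rewrite -norm_joinEr // norms_cycle xy groupV cycle_id.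
have notXy : y \notin <[x]>%g.
  apply: contraL (_ : n < n.*2) => [Xy|]; last by lia.
  rewrite -leqNgt -{1}oG -defG mulGSid ?cycle_subG //.
  by rewrite dvdn_leq ?(ltnW n_gt1) // order_dvdn xn.
have oy : #[y]%g = 2 by apply: nt_prime_order (group1_contra notXy).
have ox : #[x]%g = n.
  apply: double_inj; transitivity #|[set: dihedral_gtype n.*2]|; last exact: oG.
  rewrite -defG TI_cardMg; first by rewrite -!orderE oy muln2.
  by rewrite setIC prime_TIg ?cycle_subG // -orderE oy.
by exists x, y.
Qed.

Theorem lemma3p3 (n m : nat) :
  3 <= n -> 1 <= m <= n - 1 ->
  DCI_prop [set: dihedral_gtype n.*2] m -> odd n.
Proof.
move=> n_ge3 le_m DCI; apply: contraT => even_n.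
have n_eq : n = (n./2).*2 by rewrite even_halfK.
have [x [y [ox oy xy notXy defG]]] := dihedral_generators (ltnW n_ge3 : 1 < n).
have half_gt1 : 1 < n./2 by lia.
have ox' : #[x]%g = (n./2).*2 by rewrite ox -n_eq.
have le_m' : 1 <= m <= (n./2).*2 - 1 by rewrite -n_eq.
by case: (not_DCI_prop half_gt1 ox' oy xy notXy defG le_m' DCI).
Qed.
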